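(* Let $q$ be an odd prime power and $d\ge 2$. Let $V$ be a $(2d+1)$-dimensional vector space over $\mathbb{F}_q$ with basis $z,e_0,f_0,x,y,e_1,f_1,\dots,e_{d-2},f_{d-2}$ and nondegenerate symmetric bilinear form $\beta$ with $V=\langle z\rangle\perp\langle e_0,f_0\rangle\perp\langle x,y\rangle\perp\langle e_1,f_1\rangle\perp\cdots\perp\langle e_{d-2},f_{d-2}\rangle$, $\beta(z,z)=1$, $\beta(e_i,f_i)=1$, $\beta(e_i,e_i)=\beta(f_i,f_i)=0$, and $\langle x,y\rangle$ anisotropic; let $\kappa(v)=\beta(v,v)/2$ and let $\mathcal{Q}(2d,q)$ be the associated parabolic quadric. Let $W=\langle z,e_0,f_0\rangle$, $U=W^\perp$, $B=\{g\oplus 1_U: g\in\Omega(W)\}$ with $\Omega(W)$ the derived subgroup of the orthogonal group of $(W,\kappa|_W)$, let $\tau$ be the linear map with $z\mapsto -z$ fixing all other basis vectors, and $A=\langle B,\tau\rangle$. Then $A$ and $B$ have the same orbits on the points of $\mathcal{Q}(2d,q)$.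
   Context: A point of $\mathcal{Q}(2d,q)$ is a $1$-dimensional subspace of $V$ on which $\kappa$ vanishes. *)

From HB Require Import structures.
From mathcomp Require Import all_boot all_order all_fingroup all_algebra.
Set Implicit Arguments. Unset Strict Implicit. Unset Printing Implicit Defensive.
Import GRing.Theory.
Local Open Scope ring_scope.

(* V = F^(2d+1), row vectors, basis indexed by 0..2d in the order
   z (0), e_0 (1), f_0 (2), x (3), y (4), e_1 (5), f_1 (6), ..., e_{d-2}, f_{d-2}.
   The Gram matrix of beta: beta(z,z)=1, beta(e_i,f_i)=1, the anisotropic plane
   <x,y> has Gram matrix [[a,b],[b,c]], and all other entries are 0. *)
Definition gram_entry (F : fieldType) (a b c : F) (i j : nat) : F :=
  if (i == 0%N) && (j == 0%N) then 1
  else if ((i == 1%N) && (j == 2%N)) || ((i == 2%N) && (j == 1%N)) then 1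
  else if (i == 3%N) && (j == 3%N) then a
  else if ((i == 3%N) && (j == 4%N)) || ((i == 4%N) && (j == 3%N)) then b
  else if (i == 4%N) && (j == 4%N) then c
  else if [&& (5 <= i)%N, (5 <= j)%N, i != j & ((i - 5)./2 == (j - 5)./2)%N]
       then 1 else 0.

Definition gramV (F : fieldType) (d : nat) (a b c : F) : 'M[F]_((2 * d).+1) :=
  \matrix_(i, j) gram_entry a b c i j.

Definition betaV (F : fieldType) (d : nat) (a b c : F) (u v : 'rV[F]_((2 * d).+1)) : F :=
  (u *m gramV d a b c *m v^T) 0 0.

Definition kappaV (F : fieldType) (d : nat) (a b c : F) (v : 'rV[F]_((2 * d).+1)) : F :=
  betaV a b c v v / 2.

(* W = <z, e_0, f_0> = first three coordinates; Gram matrix of beta|_W. *)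
Definition gramW (F : fieldType) : 'M[F]_3 :=
  \matrix_(i, j) gram_entry 0 0 0 i j.

Definition kappaW (F : fieldType) (w : 'rV[F]_3) : F :=
  (w *m gramW F *m w^T) 0 0 / 2.

Definition OW (F : finFieldType) : {set {'GL_3[F]}} :=
  [set g : {'GL_3[F]} | [forall w : 'rV[F]_3, kappaW (w *m GLval g) == kappaW w]].

Definition OmegaW (F : finFieldType) : {set {'GL_3[F]}} := [~: OW F, OW F]%g.

Definition embed_mx (F : fieldType) (d : nat) (g : 'M[F]_3) : 'M[F]_((2 * d).+1) :=
  \matrix_(i, j) if (i < 3)%N && (j < 3)%N then g (inord i) (inord j)
                 else (i == j :> nat)%:R.

Definition Bgrp (F : finFieldType) (d : nat) : {set {'GL_((2 * d).+1)[F]}} :=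
  [set u : {'GL_((2 * d).+1)[F]} | [exists g in OmegaW F, GLval u == embed_mx d (GLval g)]].

Definition tauV (F : fieldType) (d : nat) : 'M[F]_((2 * d).+1) :=
  \matrix_(i, j) if i == j then (if i == 0 :> nat then -1 else 1) else 0.

Definition Agrp (F : finFieldType) (d : nat) : {set {'GL_((2 * d).+1)[F]}} :=
  (<<Bgrp F d :|: [set u : {'GL_((2 * d).+1)[F]} | GLval u == tauV F d]>>)%g.

(* On W, tau is the reflection r_z, and on any given u in W it agrees with an
   element of Omega(W): pick w with beta(w,w) = beta(z,z) = 1, w orthogonal to u
   and w + z non-isotropic.  Then r_w fixes u, and r_{w+z} r_w r_{w+z} is the
   reflection in w r_{w+z} = -z, so u [r_w, r_{w+z}] = u r_z.  Hence tau acts on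
   every vector of V like some element of B; the elements with this property form
   a group containing B and tau, hence containing A.  So A and B have the same
   orbits on all of V: only 2 != 0 (q odd) is needed, not the hypotheses on the
   quadric or on the points. *)

From HB Require Import structures.
From mathcomp Require Import all_boot all_order all_fingroup all_algebra.
From mathcomp Require Import cyclic finfield ring.
Import GRing.Theory.
Set Implicit Arguments. Unset Strict Implicit.
Local Open Scope ring_scope.

Lemma two_neq0 (F : finFieldType) : odd #|F| -> (2 : F) != 0.
Proof.
apply: contraL => /eqP two0.
have pchar2 : 2%N \in [pchar F] by rewrite inE /= two0 eqxx.
rewrite -dvdn2 -(@order_pprimeChar _ _ pchar2 1 (oner_neq0 F)).
by rewrite -cardsT order_dvdG ?inE.
Qed.

Section Reflections.
Variables (F : fieldType) (n : nat) (G : 'M[F]_n).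
Hypothesis G_sym : G^T = G.
Implicit Types u x y z w : 'rV[F]_n.

Definition form x y : F := (x *m G *m y^T) 0 0.

Lemma formDl x1 x2 y : form (x1 + x2) y = form x1 y + form x2 y.
Proof. by rewrite /form !mulmxDl mxE. Qed.

Lemma formZl a x y : form (a *: x) y = a * form x y.
Proof. by rewrite /form -!scalemxAl mxE. Qed.

Lemma formNl x y : form (- x) y = - form x y.
Proof. by rewrite -scaleN1r formZl mulN1r. Qed.

Lemma formBl x1 x2 y : form (x1 - x2) y = form x1 y - form x2 y.
Proof. by rewrite formDl formNl. Qed.

Lemma formC x y : form x y = form y x.
Proof.
have tr11 (M : 'M[F]_1) : M 0 0 = M^T 0 0 by rewrite mxE.
by rewrite /form tr11 !trmx_mul trmxK G_sym mulmxA.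
Qed.

Lemma formDr x y1 y2 : form x (y1 + y2) = form x y1 + form x y2.
Proof. by rewrite formC formDl !(formC x). Qed.

Lemma formZr a x y : form x (a *: y) = a * form x y.
Proof. by rewrite formC formZl formC. Qed.

Lemma formBr x y1 y2 : form x (y1 - y2) = form x y1 - form x y2.
Proof. by rewrite formC formBl !(formC x). Qed.

Lemma formN x : form (- x) (- x) = form x x.
Proof. by rewrite formNl formC formNl opprK. Qed.

Definition refl y : 'M[F]_n := 1%:M - (2 / form y y) *: (G *m y^T *m y).

Lemma reflE x y : x *m refl y = x - (2 * form x y / form y y) *: y.
Proof.
rewrite /refl mulmxBr mulmx1 -scalemxAr !mulmxA.
by rewrite [x *m G *m y^T]mx11_scalar mul_scalar_mx scalerA mulrAC.
Qed.

Lemma reflN y : refl (- y) = refl y.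
Proof. by rewrite /refl formN mulmxN (linearN trmx) mulmxN mulNmx opprK. Qed.

Section NonIsotropic.
Variable y : 'rV[F]_n.
Hypothesis y_nondeg : form y y != 0.

Lemma refl_invol : refl y *m refl y = 1%:M.
Proof.
apply/eqP/mulmxP => x; rewrite mulmxA mulmx1 !reflE formBl formZl.
rewrite -addrA -opprD -scalerDl.
set c := (X in X *: y); have -> : c = 0 by rewrite /c; field.
by rewrite scale0r subr0.
Qed.

Lemma form_refl x1 x2 : form (x1 *m refl y) (x2 *m refl y) = form x1 x2.
Proof. by rewrite !reflE !formBl !formBr !formZl !formZr (formC y x2); field. Qed.

Lemma form_refl_adj x1 x2 : form (x1 *m refl y) x2 = form x1 (x2 *m refl y).
Proof. by rewrite !reflE formBl formBr formZl formZr (formC y x2); field. Qed.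

Lemma refl_conj x : refl y *m refl x *m refl y = refl (x *m refl y).
Proof.
apply/eqP/mulmxP => u; rewrite !mulmxA; set u' := u *m refl y.
rewrite [u' *m _]reflE mulmxBl -scalemxAl -mulmxA refl_invol mulmx1.
by rewrite [RHS]reflE form_refl form_refl_adj.
Qed.

End NonIsotropic.

Lemma refl_commutator_on u w z :
  form w w = form z z -> form (w + z) (w + z) != 0 -> form u w = 0 ->
  u *m refl w *m refl (w + z) *m refl w *m refl (w + z) = u *m refl z.
Proof.
set y := w + z => wz_eq y_nondeg uw0.
have yy : form y y = 2 * form w y.
  by rewrite !(formDl, formDr) wz_eq (formC z w); ring.
have w_refl_y : w *m refl y = - z.
  by rewrite reflE -yy divff // scale1r opprD addrA subrr add0r.
rewrite [u *m refl w]reflE uw0 mulr0 mul0r scale0r subr0.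
by rewrite -!mulmxA [refl y *m _]mulmxA refl_conj // w_refl_y reflN.
Qed.

End Reflections.

Section PlaneW.
Variable F : fieldType.
Local Notation formW := (form (gramW F)).
Local Notation reflW := (refl (gramW F)).

Lemma gramW_sym : (gramW F)^T = gramW F.
Proof.
apply/matrixP => i j; rewrite !mxE /gram_entry.
by case: i => [[|[|[|i]]] Hi] //; case: j => [[|[|[|j]]] Hj].
Qed.

Definition vec3 (a b c : F) : 'rV[F]_3 := \row_(j < 3) [:: a; b; c]`_j.

Definition zW : 'rV[F]_3 := vec3 1 0 0.

Lemma formW_coord x y : formW x y = x 0 0 * y 0 0 + x 0 1 * y 0 2 + x 0 2 * y 0 1.
Proof.
rewrite /form !mxE !big_ord_recl !big_ord0 !mxE !big_ord_recl !big_ord0 !mxE /=.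
have -> : lift ord0 ord0 = 1 :> 'I_3 by apply/val_inj.
have -> : lift ord0 (lift ord0 ord0) = 2 :> 'I_3 by apply/val_inj.
by rewrite /gram_entry /=; ring.
Qed.

Lemma formW_zW : formW zW zW = 1.
Proof. by rewrite formW_coord !mxE /=; ring. Qed.

Lemma formW_add_zW w : formW w w = 1 -> formW (w + zW) (w + zW) = 2 * (1 + w 0 0).
Proof.
move=> ww1; rewrite !(formDl, formDr gramW_sym) ww1 formW_zW (formC gramW_sym zW).
by rewrite formW_coord !mxE /=; ring.
Qed.

Lemma exists_orth_unit u : (2 : F) != 0 ->
  exists w, [/\ formW w w = 1, formW u w = 0 & formW (w + zW) (w + zW) != 0].
Proof.
move=> two_nz.
suff [w [ww1 uw0 w0]] : exists w, [/\ formW w w = 1, formW u w = 0 & 1 + w 0 0 != 0].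
  by exists w; rewrite formW_add_zW // mulf_neq0.
have [u2|u2] := eqVneq (u 0 2) 0; last first.
  exists (vec3 1 (- u 0 0 / u 0 2) 0).
  by rewrite !formW_coord !mxE /=; split; [field | field | rewrite -[1 + 1]/2].
have [u1|u1] := eqVneq (u 0 1) 0; last first.
  exists (vec3 1 0 (- u 0 0 / u 0 1)).
  by rewrite !formW_coord !mxE /= u2; split; [field | field | rewrite -[1 + 1]/2].
exists (vec3 0 1 (1 / 2)).
by rewrite !formW_coord !mxE /= u1 u2; split; [field | ring | rewrite addr0 oner_neq0].
Qed.

Lemma reflW_zW x : x *m reflW zW = x - (2 * x 0 0) *: zW.
Proof.
by rewrite reflE formW_zW divr1 formW_coord !mxE /= mulr1 !mulr0 !addr0.
Qed.

End PlaneW.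

Section OmegaW.
Variable F : finFieldType.
Local Notation formW := (form (gramW F)).
Local Notation reflW := (refl (gramW F)).

Definition GLreflW (y : 'rV[F]_3) : {'GL_3[F]} := insubd (1%g : {'GL_3[F]}) (reflW y).

Section NonIsotropic.
Variable y : 'rV[F]_3.
Hypothesis y_nondeg : formW y y != 0.

Lemma GLreflWE : GLval (GLreflW y) = reflW y.
Proof. by rewrite insubdK //; have [] := mulmx1_unit (refl_invol y_nondeg). Qed.

Lemma GLreflW_OW : GLreflW y \in OW F.
Proof.
rewrite inE; apply/forallP => x; rewrite GLreflWE.
by have := form_refl (gramW_sym F) y_nondeg x x; rewrite /form /kappaW => ->.
Qed.

Lemma GLreflW_inv : ((GLreflW y)^-1)%g = GLreflW y.
Proof.
apply: (mulgI (GLreflW y)); rewrite mulgV; apply: val_inj.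
by rewrite /= [FinRing.uval _]GLreflWE -mulmxE refl_invol.
Qed.

End NonIsotropic.

Lemma OmegaW_acts_as_reflW_zW (u : 'rV[F]_3) : (2 : F) != 0 ->
  exists2 g, g \in OmegaW F & u *m GLval g = u *m reflW (zW F).
Proof.
move=> two_nz; have [w [ww1 uw0 y_nondeg]] := exists_orth_unit u two_nz.
have w_nondeg : formW w w != 0 by rewrite ww1 oner_neq0.
exists [~ GLreflW w, GLreflW (w + zW F)]%g; first by rewrite /OmegaW mem_commg ?GLreflW_OW.
rewrite /commg /conjg !GLreflW_inv // !GL_MxE !GLreflWE // !mulmxA.
by rewrite (refl_commutator_on (gramW_sym F)) ?formW_zW.
Qed.

End OmegaW.

Section Embedding.
Variables (F : fieldType) (d : nat).
Hypothesis d_gt0 : (0 < d)%N.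
Local Notation n := (2 * d).+1.

Lemma three_le_n : (3 <= n)%N.
Proof. by rewrite ltnS -{1}[2%N]muln1 leq_pmul2l. Qed.

Definition lsub3 (v : 'rV[F]_n) : 'rV[F]_3 := \row_(k < 3) v 0 (inord k).

Lemma embed_mxE (M : 'M[F]_3) (v : 'rV[F]_n) (j : 'I_n) :
  (v *m embed_mx d M) 0 j = if (j < 3)%N then (lsub3 v *m M) 0 (inord j) else v 0 j.
Proof.
rewrite !mxE; case: ifP => j_lt3.
  pose f k := v 0 (inord k) * M (inord k) (inord j).
  transitivity (\sum_(k < n | (k < 3)%N) f k).
    rewrite [RHS]big_mkcond; apply: eq_bigr => i _; rewrite mxE j_lt3 andbT /f inord_val.
    case: ifP => // i_ge3; rewrite (_ : _ == _ = false) ?mulr0 //.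
    by apply: contraFF i_ge3 => /eqP ->.
  by rewrite -big_ord_widen ?three_le_n //; apply: eq_bigr => k _; rewrite /f inord_val mxE.
rewrite (bigD1 j) //= mxE j_lt3 andbF eqxx mulr1 big1 ?addr0 // => i.
rewrite -val_eqE => /negbTE ij.
by rewrite mxE j_lt3 andbF ij mulr0.
Qed.

Lemma lsub3_embed (M : 'M[F]_3) (v : 'rV[F]_n) : lsub3 (v *m embed_mx d M) = lsub3 v *m M.
Proof.
apply/rowP => k; have k_lt_n := leq_trans (ltn_ord k) three_le_n.
by rewrite mxE embed_mxE inordK // ltn_ord inord_val.
Qed.

Lemma embed_mx_mul (A B : 'M[F]_3) : embed_mx d (A *m B) = embed_mx d A *m embed_mx d B.
Proof.
apply/eqP/mulmxP => v; apply/rowP => j.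
by rewrite mulmxA !embed_mxE lsub3_embed mulmxA; case: ifP.
Qed.

Lemma embed_mx1 : embed_mx d (1%:M : 'M[F]_3) = 1%:M.
Proof.
apply/eqP/mulmxP => v; apply/rowP => j; rewrite embed_mxE !mulmx1.
by case: ifP => // j_lt3; rewrite mxE inordK // inord_val.
Qed.

Lemma embed_mx_row_eq (A B : 'M[F]_3) (v : 'rV[F]_n) :
  lsub3 v *m A = lsub3 v *m B -> v *m embed_mx d A = v *m embed_mx d B.
Proof. by move=> AB; apply/rowP => j; rewrite !embed_mxE AB. Qed.

Lemma embed_mx_reflW_zW : embed_mx d (refl (gramW F) (zW F)) = tauV F d.
Proof.
apply/eqP/mulmxP => v; apply/rowP => j.
rewrite embed_mxE reflW_zW !mxE (bigD1 j) //= mxE eqxx big1 => [|i]; last first.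
  by rewrite mxE -val_eqE eq_sym => /negbTE ->; rewrite mulr0.
rewrite addr0; case: ifP => [j_lt3 | j_ge3]; last first.
  by rewrite ifF ?mulr1 //; apply: contraFF j_ge3 => /eqP ->.
rewrite !inordK // inord_val; case: ifP => [/eqP j0 | /negbT j_neq0].
  have -> : inord 0 = j by apply: ord_inj; rewrite inordK // j0.
  by rewrite j0 /=; ring.
have -> : [:: 1; 0; 0]`_j = 0 :> F.
  by move: j_neq0; case: (nat_of_ord j) => [|[|[|k]]] //= _; rewrite nth_nil.
by rewrite mulr0 subr0 mulr1.
Qed.

End Embedding.

Section LocallyIn.
Variables (gT : finGroupType) (T : finType) (act : T -> gT -> T).
Hypothesis actM : forall x g h, act x (g * h)%g = act (act x g) h.
Variable B : {set gT}.
Hypothesis groupB : group_set B.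

Definition locally_in : {set gT} :=
  [set g | [forall x, [exists b in B, act x g == act x b]]].

Lemma locally_inP g :
  reflect (forall x, exists2 b, b \in B & act x g = act x b) (g \in locally_in).
Proof.
rewrite inE; apply: (iffP forallP) => [gB x | gB x].
  by have /exists_inP[b bB /eqP] := gB x; exists b.
by have [b bB gb] := gB x; apply/exists_inP; exists b; rewrite ?gb.
Qed.

Lemma locally_in_group : group_set locally_in.
Proof.
apply/group_setP; split.
  by apply/locally_inP => x; exists 1%g; rewrite ?(group_setP groupB).1.
move=> g h /locally_inP gB /locally_inP hB; apply/locally_inP => x.
have [b1 b1B gb1] := gB x; have [b2 b2B hb2] := hB (act x b1).
by exists (b1 * b2)%g; [exact: (group_setP groupB).2 | rewrite !actM gb1 hb2].
Qed.

Lemma gen_sub_locally_in (S : {set gT}) :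
  S \subset locally_in -> (<<B :|: S>>)%g \subset locally_in.
Proof.
move=> S_loc; rewrite (gen_subG _ (Group locally_in_group)) subUset S_loc andbT.
by apply/subsetP => b bB; apply/locally_inP => x; exists b.
Qed.

End LocallyIn.

Section TauInB.
Variables (F : finFieldType) (d : nat).
Hypothesis d_gt0 : (0 < d)%N.
Local Notation n := (2 * d).+1.

Definition GLembed (g : {'GL_3[F]}) : {'GL_n[F]} :=
  insubd (1%g : {'GL_n[F]}) (embed_mx d (GLval g)).

Lemma GLembedE g : GLval (GLembed g) = embed_mx d (GLval g).
Proof.
rewrite insubdK //; have := congr1 GLval (mulgV g); rewrite GL_MxE => gV.
have : embed_mx d (GLval g) *m embed_mx d (GLval (g^-1)%g) = 1%:M.
  by rewrite -embed_mx_mul // gV embed_mx1.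
by case/mulmx1_unit.
Qed.

Lemma Bgrp_group : group_set (Bgrp F d).
Proof.
apply/group_setP; split.
  by rewrite inE; apply/exists_inP; exists 1%g; rewrite ?group1 ?GL_1E ?embed_mx1.
move=> u1 u2; rewrite !inE => /exists_inP[g1 g1W /eqP u1E] /exists_inP[g2 g2W /eqP u2E].
apply/exists_inP; exists (g1 * g2)%g; first exact: groupM g1W g2W.
by rewrite !GL_MxE u1E u2E embed_mx_mul.
Qed.

Lemma tauV_acts_in_Bgrp (v : 'rV[F]_n) : (2 : F) != 0 ->
  exists2 b, b \in Bgrp F d & v *m tauV F d = v *m GLval b.
Proof.
move=> two_nz; have [g gW gz] := OmegaW_acts_as_reflW_zW (lsub3 v) two_nz.
exists (GLembed g); first by rewrite inE; apply/exists_inP; exists g; rewrite ?GLembedE.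
by rewrite GLembedE -(embed_mx_reflW_zW F d_gt0) (embed_mx_row_eq d_gt0 gz).
Qed.

Definition GLact (x : 'rV[F]_n) (g : {'GL_n[F]}) : 'rV[F]_n := x *m GLval g.

Lemma GLactM x g h : GLact x (g * h)%g = GLact (GLact x g) h.
Proof. by rewrite /GLact GL_MxE mulmxA. Qed.

Lemma Agrp_locally_in_Bgrp : (2 : F) != 0 -> Agrp F d \subset locally_in GLact (Bgrp F d).
Proof.
move=> two_nz; apply: (gen_sub_locally_in GLactM Bgrp_group).
apply/subsetP => u; rewrite inE => /eqP uE; apply/locally_inP => x.
by rewrite /GLact uE; apply: tauV_acts_in_Bgrp.
Qed.

End TauInB.

Theorem corollary3p6 (F : finFieldType) (q d : nat) (a b c : F) :
  #|F| = q -> odd q -> (2 <= d)%N ->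
  (forall s t : F, (s != 0) || (t != 0) ->
     a * s ^+ 2 + 2 * b * s * t + c * t ^+ 2 != 0) ->
  forall v w : 'rV[F]_((2 * d).+1),
    v != 0 -> kappaV a b c v = 0 -> w != 0 -> kappaV a b c w = 0 ->
    (exists2 g, g \in Agrp F d & (v *m GLval g == w)%MS) <->
    (exists2 g, g \in Bgrp F d & (v *m GLval g == w)%MS).
Proof.
move=> cardF odd_q d_ge2 _ v w _ _ _ _.
have d_gt0 : (0 < d)%N by apply: leq_trans d_ge2.
have two_nz : (2 : F) != 0 by apply: two_neq0; rewrite cardF.
split=> [[g gA vgw] | [g gB vgw]]; last by exists g; rewrite // mem_gen // inE gB.
have /locally_inP/(_ v)[u uB vgu] := subsetP (Agrp_locally_in_Bgrp d_gt0 two_nz) g gA.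
by exists u; rewrite // -[v *m _]/(GLact v u) -vgu.
Qed.
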